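(* For each type $X$ in the list below, the determinant of the (finite) Cartan matrix $C_{\mathrm{fin}}$ of type $X$ equals $$\det C_{\mathrm{fin}}=\frac{8\,pqr}{ab},$$ where $(a,b,p,q,r)$ is given by: $\mathsf A_l$ ($l\ge0$): $(2,\,l+1,\,\tfrac12(l+1),\,\tfrac12(l+1),\,1)$; $\mathsf D_l$ ($l\ge4$): $(4,\,2l-4,\,l-2,\,2,\,2)$; $\mathsf E_6$: $(6,8,3,3,2)$; $\mathsf E_7$: $(8,12,4,3,2)$; $\mathsf E_8$: $(12,20,5,3,2)$; $\mathsf C_l$ ($l\ge2$): $(2,\,2l,\,l,\,1,\,1)$; $\mathsf B_l$ ($l\ge3$): $(4,\,2l-2,\,l-1,\,2,\,1)$; $\mathsf F_4$: $(6,8,3,2,1)$; $\mathsf G_2$: $(4,4,2,1,1)$.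
   Context: $C_{\mathrm{fin}}$ is the $l\times l$ Cartan matrix of the finite root system of type $X$ of rank $l$ (for $\mathsf A_0$ it is the empty matrix, with determinant $1$). *)

From HB Require Import structures.
From mathcomp Require Import all_boot all_order all_algebra.
Set Implicit Arguments. Unset Strict Implicit. Unset Printing Implicit Defensive.
Import Order.TTheory GRing.Theory Num.Theory.
Local Open Scope ring_scope.

Inductive cartan_type :=
| TA of nat | TB of nat | TC of nat | TD of nat
| TE6 | TE7 | TE8 | TF4 | TG2.

Definition rank (X : cartan_type) : nat :=
  match X with
  | TA l | TB l | TC l | TD l => l
  | TE6 => 6 | TE7 => 7 | TE8 => 8 | TF4 => 4 | TG2 => 2
  end.

Definition admissible (X : cartan_type) : bool :=
  match X with
  | TA l => true
  | TB l => (3 <= l)%N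
  | TC l => (2 <= l)%N
  | TD l => (4 <= l)%N
  | _ => true
  end.

Definition chain_adj (i j : nat) : bool := (i.+1 == j) || (j.+1 == i).

(* Dynkin diagram of E_n in Bourbaki numbering (0-based):
   0 - 2 - 3 - 4 - 5 - 6 - 7, with 1 attached to 3. *)
Definition E_adj (i j : nat) : bool :=
  let e a b := ((i == a) && (j == b)) || ((i == b) && (j == a)) in
  [|| e 0 2, e 2 3, e 3 4, e 4 5, e 5 6, e 6 7 | e 1 3]%N.

(* Off-diagonal Cartan entries a_ij = <alpha_i^vee, alpha_j> (Kac's
   convention), 0-based Bourbaki numbering of simple roots. *)
Definition cartan_offdiag (X : cartan_type) (i j : nat) : int :=
  match X with
  | TA l => if chain_adj i j then -1 else 0
  | TB l => if (i == l.-1) && (j == l.-2) then -2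
            else if chain_adj i j then -1 else 0
  | TC l => if (i == l.-2) && (j == l.-1) then -2
            else if chain_adj i j then -1 else 0
  | TD l => if (chain_adj i j && (i <= l.-2) && (j <= l.-2))%N
              || ((i == l.-1) && (j == (l - 3)%N)) || ((i == (l - 3)%N) && (j == l.-1))
            then -1 else 0
  | TE6 | TE7 | TE8 => if E_adj i j then -1 else 0
  | TF4 => if (i == 2) && (j == 1) then -2
           else if chain_adj i j then -1 else 0
  | TG2 => if (i == 0) && (j == 1) then -3
           else if (i == 1) && (j == 0) then -1 else 0
  end.

Definition cartan_entry (X : cartan_type) (i j : nat) : int :=
  if i == j then 2 else cartan_offdiag X i j.

Definition cartan_fin (X : cartan_type) : 'M[int]_(rank X) :=
  \matrix_(i, j) cartan_entry X i j.

Definition params (X : cartan_type) : rat * rat * rat * rat * rat :=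
  match X with
  | TA l => (2, (l.+1)%:R, (l.+1)%:R / 2, (l.+1)%:R / 2, 1)
  | TD l => (4, 2 * l%:R - 4, l%:R - 2, 2, 2)
  | TE6 => (6, 8, 3, 3, 2)
  | TE7 => (8, 12, 4, 3, 2)
  | TE8 => (12, 20, 5, 3, 2)
  | TC l => (2, 2 * l%:R, l%:R, 1, 1)
  | TB l => (4, 2 * l%:R - 2, l%:R - 1, 2, 1)
  | TF4 => (6, 8, 3, 2, 1)
  | TG2 => (4, 4, 2, 1, 1)
  end.

From mathcomp Require Import all_boot all_order all_algebra.
From mathcomp Require Import zify ring lra.
Import GRing.Theory Num.Theory.
Local Open Scope ring_scope.

(* Every connected Dynkin diagram of finite type has a leaf; expanding det C
   along the row and column of a leaf gives the continuant recurrence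
   det C_(n+2) = 2 det C_(n+1) - a_ij a_ji det C_n.  Along A_l, along D_l
   (peeling the far end of the long arm) and along E_3 < ... < E_8 the product
   a_ij a_ji is 1, so the determinants form arithmetic progressions: l + 1 for
   A_l, constantly 4 for D_l, 9 - n for E_n.  For B_l and C_l one step of the
   recurrence from A_(l-1) and A_(l-2) with a_ij a_ji = 2 gives
   2 l - 2 (l - 1) = 2, and F_4, G_2 unfold to 1 in the same way.  These are
   exactly the values of 8pqr/(ab). *)

Section LeadingMinors.

Context {R : comPzRingType}.
Implicit Types f g : nat -> nat -> R.

Definition lead_minor f n : R := \det (\matrix_(i, j < n) f i j).

Lemma eq_lead_minor f g n :
  (forall i j, (i < n)%N -> (j < n)%N -> f i j = g i j) ->
  lead_minor f n = lead_minor g n.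
Proof.
by move=> eq_fg; congr (\det _); apply/matrixP => i j; rewrite !mxE eq_fg.
Qed.

Lemma lead_minor0 f : lead_minor f 0 = 1.
Proof. exact: det_mx00. Qed.

Lemma lead_minor1 f : lead_minor f 1 = f 0%N 0%N.
Proof. by rewrite /lead_minor det_mx11 mxE. Qed.

Lemma lead_minor_tr f n : lead_minor (fun i j => f j i) n = lead_minor f n.
Proof.
by rewrite /lead_minor -det_tr; congr (\det _); apply/matrixP => i j; rewrite !mxE.
Qed.

Lemma lead_minor_expand_first_row f n :
  lead_minor f n.+1 =
  \sum_(j < n.+1) f 0%N j * (-1) ^+ j * lead_minor (fun a b => f a.+1 (bump j b)) n.
Proof.
rewrite /lead_minor (expand_det_row _ ord0); apply: eq_bigr => j _.
rewrite mxE /cofactor add0n mulrA; congr (_ * _ * \det _).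
by apply/matrixP => a b; rewrite !mxE.
Qed.

Lemma lead_minor_expand_last_row f n :
  lead_minor f n.+1 =
  \sum_(j < n.+1) f n j * (-1) ^+ (n + j) * lead_minor (fun a b => f a (bump j b)) n.
Proof.
rewrite /lead_minor (expand_det_row _ ord_max); apply: eq_bigr => j _.
rewrite mxE /cofactor mulrA; congr (_ * _ * \det _).
by apply/matrixP => a b; rewrite !mxE /= /bump leqNgt ltn_ord.
Qed.

Lemma lead_minor_recl f n :
  (forall j, (j < n)%N -> f 0%N j.+2 = 0) -> (forall i, (i < n)%N -> f i.+2 0%N = 0) ->
  lead_minor f n.+2 = f 0%N 0%N * lead_minor (fun i j => f i.+1 j.+1) n.+1
                      - f 0%N 1%N * f 1%N 0%N * lead_minor (fun i j => f i.+2 j.+2) n.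
Proof.
move=> row0 col0.
rewrite lead_minor_expand_first_row 2!big_ord_recl big1 => [|j _]; last first.
  by rewrite /= row0 // !mul0r.
rewrite /= addr0 expr0 mulr1 expr1 mulrN1 mulNr -mulrA; congr (_ * _ - _ * _).
rewrite -lead_minor_tr lead_minor_expand_first_row big_ord_recl big1 => [|j _]; last first.
  by rewrite /= col0 // !mul0r.
by rewrite /= addr0 expr0 mulr1 lead_minor_tr.
Qed.

Lemma lead_minor_recr f n :
  (forall j, (j < n)%N -> f n.+1 j = 0) -> (forall i, (i < n)%N -> f i n.+1 = 0) ->
  lead_minor f n.+2 = f n.+1 n.+1 * lead_minor f n.+1 - f n.+1 n * f n n.+1 * lead_minor f n.
Proof.
move=> rowN colN; have sign_even m : (-1) ^+ (m + m) = 1 :> R.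
  by rewrite -signr_odd addnn odd_double.
have bump_lt m j : (j < m)%N -> bump m j = j by move=> ltjm; rewrite /bump leqNgt ltjm.
have bump_nn : bump n n = n.+1 by rewrite /bump leqnn.
rewrite lead_minor_expand_last_row 2!big_ord_recr big1 => [|j _]; last first.
  by rewrite /= rowN // !mul0r.
rewrite /= add0r addrC sign_even mulr1 (@eq_lead_minor _ f) => [|i j _ ltj]; last first.
  by rewrite bump_lt.
rewrite addSn exprS sign_even mulr1 mulrN1 mulNr -mulrA; congr (_ - _ * _).
rewrite -lead_minor_tr lead_minor_expand_last_row big_ord_recr big1 => [|j _]; last first.
  by rewrite /= bump_nn colN // !mul0r.
rewrite /= add0r bump_nn sign_even mulr1 -lead_minor_tr; congr (_ * _).
by apply: eq_lead_minor => i j lti ltj; rewrite !bump_lt.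
Qed.

End LeadingMinors.

Lemma linear_of_second_difference0 (V : zmodType) (d : nat -> V) n :
  (forall i, (i.+2 <= n)%N -> d i.+2 = d i.+1 *+ 2 - d i) ->
  d n = d 0%N + (d 1%N - d 0%N) *+ n.
Proof.
move=> rec; have step i : (i < n)%N -> d 1%N - d 0%N = d i.+1 - d i.
  elim: i => [|i IH] lt_i //.
  by rewrite rec // mulr2n addrAC addrK IH // ltnW.
rewrite -[n in _ *+ n]subn0 -sumr_const_nat.
rewrite (@telescope_sumr_eq _ _ _ d) => [|//|i /andP[_ /step]//].
by rewrite addrC subrK.
Qed.

Ltac cartan_lia :=
  rewrite /cartan_entry /cartan_offdiag /chain_adj /E_adj /=;
  repeat (first [case: eqP => ? | case: leqP => ?]; try (exfalso; lia));
  simpl; try done; lia.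

Ltac expand_lead_minor :=
  repeat rewrite lead_minor_expand_first_row !big_ord_recr big_ord0 /=;
  rewrite ?lead_minor0.

Lemma det_cartan_fin X : \det (cartan_fin X) = lead_minor (cartan_entry X) (rank X).
Proof. by []. Qed.

Lemma lead_minor_cartan_A m l : lead_minor (cartan_entry (TA m)) l = l.+1%:Z.
Proof.
rewrite (@linear_of_second_difference0 _ (lead_minor _)) => [|i _].
  by rewrite lead_minor0 lead_minor1 /= nat1r natz.
by rewrite mulr2n lead_minor_recr => *; cartan_lia.
Qed.

Lemma lead_minor_A_block X n :
  (forall i j, (i < n)%N -> (j < n)%N -> cartan_entry X i j = cartan_entry (TA 0) i j) ->
  lead_minor (cartan_entry X) n = n.+1%:Z.
Proof. by move=> /eq_lead_minor ->; apply: lead_minor_cartan_A. Qed.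

Lemma lead_minor_cartan_B n : lead_minor (cartan_entry (TB n.+2)) n.+2 = 2.
Proof. by rewrite lead_minor_recr ?lead_minor_A_block => *; cartan_lia. Qed.

Lemma lead_minor_cartan_C n : lead_minor (cartan_entry (TC n.+2)) n.+2 = 2.
Proof. by rewrite lead_minor_recr ?lead_minor_A_block => *; cartan_lia. Qed.

Lemma lead_minor_cartan_D n : lead_minor (cartan_entry (TD n.+3)) n.+3 = 4.
Proof.
pose d i := lead_minor (cartan_entry (TD i.+3)) i.+3.
rewrite -/(d n) (@linear_of_second_difference0 _ d) => [|i _].
  have -> : d 0%N = 4 by rewrite /d; expand_lead_minor.
  have -> : d 1%N = 4 by rewrite /d; expand_lead_minor.
  by rewrite subrr mul0rn addr0.
rewrite mulr2n {1}/d lead_minor_recl => [|j ltj|j ltj]; try by cartan_lia.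
have -> : lead_minor (fun a b => cartan_entry (TD i.+2.+3) a.+1 b.+1) i.+4 = d i.+1.
  by apply: eq_lead_minor => a b lta ltb; cartan_lia.
have -> : lead_minor (fun a b => cartan_entry (TD i.+2.+3) a.+2 b.+2) i.+3 = d i.
  by apply: eq_lead_minor => a b lta ltb; cartan_lia.
by cartan_lia.
Qed.

Lemma lead_minor_cartan_E n : (n <= 5)%N -> lead_minor (cartan_entry TE8) n.+3 = 6 - n%:Z.
Proof.
move=> le_n5; pose d i := lead_minor (cartan_entry TE8) i.+3.
rewrite -/(d n) (@linear_of_second_difference0 _ d) => [|i lei].
  have -> : d 0%N = 6 by rewrite /d; expand_lead_minor.
  have -> : d 1%N = 5 by rewrite /d; expand_lead_minor.
  by rewrite -mulNrn -natz; lia.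
by rewrite /d mulr2n lead_minor_recr => *; cartan_lia.
Qed.

Lemma lead_minor_cartan_F4 : lead_minor (cartan_entry TF4) 4 = 1.
Proof. by rewrite !lead_minor_recr ?lead_minor1 ?lead_minor0 => *; cartan_lia. Qed.

Lemma lead_minor_cartan_G2 : lead_minor (cartan_entry TG2) 2 = 1.
Proof. by rewrite lead_minor_recr ?lead_minor1 ?lead_minor0. Qed.

Theorem mainTheorem5 (X : cartan_type) :
  admissible X ->
  let: (a, b, p, q, r) := params X in
  ((\det (cartan_fin X))%:~R : rat) = 8 * p * q * r / (a * b).
Proof.
rewrite det_cartan_fin; case: X => [l|l|l|l| | | | |] /= adm.
- by rewrite lead_minor_cartan_A; field; rewrite nat1r pnatr_eq0.
- case: l adm => [|[|[|l]]] // _; rewrite lead_minor_cartan_B.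
  by field; have := ler0n rat l; lra.
- case: l adm => [|[|l]] // _; rewrite lead_minor_cartan_C.
  by field; have := ler0n rat l; lra.
- case: l adm => [|[|[|[|l]]]] // _; rewrite lead_minor_cartan_D.
  by field; have := ler0n rat l; lra.
(* [cartan_entry TE6] and [cartan_entry TE7] are convertible to [cartan_entry TE8]. *)
- by rewrite (lead_minor_cartan_E 3).
- by rewrite (lead_minor_cartan_E 4).
- by rewrite (lead_minor_cartan_E 5).
- by rewrite lead_minor_cartan_F4.
- by rewrite lead_minor_cartan_G2.
Qed.
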